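(* Let $p={\rm char}(\mathbb{F}_q)>3$ and let $k$ be a positive integer. Then, as polynomials in $\mathbb{F}_q[x]$, $$2^{p^k}D_{p^k,3}(1,x)+1=3(1-4x)^{\frac{p^k-1}{2}}.$$
   Context: $q=p^e$ with $p>3$ prime. For $n\ge 1$ and $a\in\mathbb{F}_q$, $D_{n,3}(a,x)=\sum_{i=0}^{\lfloor n/2\rfloor}\frac{n-3i}{n-i}\binom{n-i}{i}(-x)^i a^{n-2i}\in\mathbb{F}_q[x]$, where each coefficient $\frac{n-3i}{n-i}\binom{n-i}{i}$ is an integer read modulo $p$; and $D_{0,3}(a,x)=-1$. *)

From HB Require Import structures.
From mathcomp Require Import all_boot all_order all_algebra all_field.
Set Implicit Arguments. Unset Strict Implicit. Unset Printing Implicit Defensive.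
Import Order.TTheory GRing.Theory Num.Theory.
Local Open Scope ring_scope.

(* The integer coefficient ((n - 3i)/(n - i)) * binom(n - i, i), computed as the
   exact integer quotient ((n - 3i) * binom(n-i,i)) / (n - i) in int. *)
Definition Dcoef (n i : nat) : int :=
  (((n%:Z - (3 * i)%:Z) * ('C(n - i, i))%:Z) %/ (n - i)%:Z)%Z.

Definition D3 (F : nzRingType) (n : nat) (a : F) : {poly F} :=
  if n == 0%N then -1 else
  \sum_(i < n./2.+1) ((Dcoef n i)%:~R * a ^+ (n - 2 * i)) *: (- 'X) ^+ i.

From HB Require Import structures.
From mathcomp Require Import all_boot all_order all_algebra all_field.
From mathcomp Require Import ring zify.
Import GRing.Theory.
Local Open Scope ring_scope.
Set Implicit Arguments. Unset Strict Implicit. Unset Printing Implicit Defensive.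

(* The polynomials c_n = 2^n E_n(1, X) obey c_(n+2) = 2 c_(n+1) - 4X c_n, whose
   characteristic roots are 1 +- u with u^2 = 1 - 4X.  Adjoining such a u (as a
   2x2 matrix over F[X]) gives (1 + u)^(n+1) = (c_(n+1) - c_n) + c_n u.  In
   characteristic p the Frobenius turns (1 + u)^(p^k) into 1 + u^(p^k)
   = 1 + (1 - 4X)^m u, where p^k = 2m + 1; comparing coordinates yields
   c_(2m) = (1 - 4X)^m and c_(2m+1) - c_(2m) = 1.  Since D_(n,3)(1, X)
   = 2 E_(n-1) - E_n, we get 2^n D_(n,3)(1, X) + 1 = 4 c_(n-1) - c_n + 1
   = 3 c_(n-1) = 3 (1 - 4X)^m. *)

Lemma exprD1n_pchar (R : nzRingType) p k (x : R) :
  p \in [pchar R] -> (1 + x) ^+ (p ^ k) = 1 + x ^+ (p ^ k).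
Proof.
move=> pcharRp; elim: k => [|k IHk]; first by rewrite !expr1.
rewrite expnSr !exprM IHk -!(pFrobenius_autE pcharRp).
by rewrite pFrobenius_autD_comm ?pFrobenius_aut1 //; exact/commr_sym/commr1.
Qed.

Section Dickson.

Variable F : comNzRingType.

Definition dicksonE n : {poly F} := \poly_(i < n.+1) ('C(n - i, i)%:R * (-1) ^+ i).

Lemma coef_dicksonE n i : (dicksonE n)`_i = 'C(n - i, i)%:R * (-1) ^+ i.
Proof.
rewrite coef_poly; case: ltnP => // lt_n_i.
by rewrite bin_small ?mul0r //; lia.
Qed.

Lemma dicksonE0 : dicksonE 0 = 1.
Proof. by apply/polyP=> -[|i]; rewrite coef_dicksonE coefC ?bin0 ?bin0n ?mulr1 ?mul0r. Qed.

Lemma dicksonE1 : dicksonE 1 = 1.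
Proof. by apply/polyP=> -[|[|i]]; rewrite coef_dicksonE coefC ?bin0 ?bin0n ?mulr1 ?mul0r. Qed.

Lemma dicksonESS n : dicksonE n.+2 = dicksonE n.+1 - 'X * dicksonE n.
Proof.
apply/polyP=> -[|i]; rewrite coefB coefXM !coef_dicksonE /=; first by rewrite !bin0 subr0.
rewrite exprS mulN1r !mulrN -opprD.
have [le_i_n | lt_n_i] := leqP i n; last by rewrite !bin_small ?mul0r ?addr0 //; lia.
by rewrite !subSS subSn // binS natrD mulrDl.
Qed.

Definition dicksonE2 n : {poly F} := 2 ^+ n * dicksonE n.

Lemma dicksonE2SS n : dicksonE2 n.+2 = 2 * dicksonE2 n.+1 - 4 * 'X * dicksonE2 n.
Proof. rewrite /dicksonE2 dicksonESS !exprS; ring. Qed.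

Lemma dicksonE2_0 : dicksonE2 0 = 1.
Proof. by rewrite /dicksonE2 dicksonE0 mulr1. Qed.

Lemma dicksonE2_1 : dicksonE2 1 = 2.
Proof. by rewrite /dicksonE2 dicksonE1 mulr1. Qed.

Local Notation s := (1 - 4 * 'X : {poly F}).

Section SquareRoot.

Variables (A : algType {poly F}) (u : A).
Hypothesis sqr_u : u * u = s%:A.

Lemma expr_1Dsqrt n :
  (1 + u) ^+ n.+1 = (dicksonE2 n.+1 - dicksonE2 n)%:A + dicksonE2 n *: u.
Proof.
elim: n => [|n IHn].
  by rewrite expr1 dicksonE2_1 dicksonE2_0 scale1r (_ : 2 - 1 = 1) ?scale1r //; ring.
rewrite exprS IHn mulrDl mul1r mulrDr mulr_algr -scalerAr sqr_u.
rewrite scalerA [_ *: u + _]addrC addrACA -!scalerDl; congr (_ *: _ + _ *: _).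
- by rewrite dicksonE2SS; ring.
- by ring.
Qed.

Lemma expr_odd_sqrt m : u ^+ (2 * m).+1 = s ^+ m *: u.
Proof. by rewrite exprSr exprM expr2 sqr_u exprZn expr1n mulr_algl. Qed.

Lemma dicksonE2_pchar_sqrt p k m : p \in [pchar F] -> (p ^ k = (2 * m).+1)%N ->
  (dicksonE2 (2 * m).+1 - dicksonE2 (2 * m))%:A + dicksonE2 (2 * m) *: u
  = 1 + s ^+ m *: u.
Proof.
move=> pcharFp pk; have pcharAp : p \in [pchar A].
  by apply: (rmorph_pchar (in_alg A)); rewrite pchar_poly.
by rewrite -expr_1Dsqrt -pk exprD1n_pchar // pk expr_odd_sqrt.
Qed.

End SquareRoot.

Definition sqrt_mx : 'M[{poly F}]_2 :=
  \matrix_(i, j) if i == j then 0 else if i == 0 then 1 else s.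

Lemma sqrt_mx_sqr : sqrt_mx * sqrt_mx = s%:A.
Proof.
apply/matrixP=> i j; rewrite scalemx1 !mxE !big_ord_recl big_ord0 !mxE /=.
by case: i => -[|[|//]] ?; case: j => -[|[|//]] ?;
  rewrite /= ?mul0r ?mulr0 ?addr0 ?add0r ?mulr1 ?mul1r.
Qed.

Lemma alg_sqrt_mx_inj a b a' b' :
  a%:A + b *: sqrt_mx = a'%:A + b' *: sqrt_mx -> a = a' /\ b = b'.
Proof.
rewrite !scalemx1 => eq_ab.
have := congr1 (fun M : 'M_2 => M 0 0) eq_ab.
have := congr1 (fun M : 'M_2 => M 0 1) eq_ab.
by rewrite !mxE /= !mulr0 !mulr1 !addr0 !add0r.
Qed.

Lemma dicksonE2_pchar p k m : p \in [pchar F] -> (p ^ k = (2 * m).+1)%N ->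
  dicksonE2 (2 * m) = s ^+ m /\ dicksonE2 (2 * m).+1 - dicksonE2 (2 * m) = 1.
Proof.
move=> pcharFp pk; have := dicksonE2_pchar_sqrt sqrt_mx_sqr pcharFp pk.
by rewrite -[1 in RHS]scale1r => /alg_sqrt_mx_inj[-> ->].
Qed.

End Dickson.

Lemma Dcoef0 n : (0 < n)%N -> Dcoef n 0 = 1.
Proof. by move=> n_gt0; rewrite /Dcoef muln0 subr0 bin0 subn0 mulr1 divzz; lia. Qed.

Lemma DcoefE n i : (0 < i < n)%N ->
  Dcoef n i = 'C(n - i, i)%:Z - 2 * 'C(n - i - 1, i - 1)%:Z.
Proof.
move=> lt_0_i_n; rewrite /Dcoef.
have bin_diag := mul_bin_diag (n - i) (i - 1).
rewrite (_ : (n - i).-1 = n - i - 1)%N in bin_diag; last by lia.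
rewrite (_ : (i - 1).+1 = i)%N in bin_diag; last by lia.
have -> : (n%:Z - (3 * i)%:Z) * 'C(n - i, i)%:Z
          = (n - i)%:Z * ('C(n - i, i)%:Z - 2 * 'C(n - i - 1, i - 1)%:Z) by nia.
by rewrite mulKz //; lia.
Qed.

Lemma D3_1E (F : comNzRingType) n : (0 < n)%N ->
  D3 n (1 : F) = \poly_(i < n./2.+1) ((Dcoef n i)%:~R * (-1) ^+ i).
Proof.
case: n => // n _; rewrite /D3 /= poly_def; apply: eq_bigr => i _.
by rewrite -scaleN1r exprZn scalerA expr1n mulr1.
Qed.

Lemma D3_1_dicksonE (F : comNzRingType) n :
  D3 n.+2 (1 : F) = 2 * dicksonE F n.+1 - dicksonE F n.+2.
Proof.
suff -> : D3 n.+2 (1 : F) = dicksonE F n.+2 + 2 * ('X * dicksonE F n).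
  by rewrite dicksonESS; ring.
apply/polyP=> -[|j]; rewrite D3_1E // coef_poly coefD mulr_natl coefMn coefXM
  !coef_dicksonE /=; first by rewrite Dcoef0 // bin0 mul0rn addr0.
case: ltnP => [lt_j_half | le_half_j].
  rewrite DcoefE; last by rewrite -divn2 in lt_j_half; lia.
  rewrite (_ : n.+2 - j.+1 - 1 = n - j)%N ?subn1 //; last by lia.
  by rewrite intrB intrM -!pmulrn exprS mulr2n; ring.
by rewrite -divn2 in le_half_j; rewrite !bin_small ?mul0r ?mul0rn ?addr0 //; lia.
Qed.

Theorem proposition2p7 (F : finFieldType) (p k : nat)
  (hp : prime p) (hchar : p \in [pchar F]) (hp3 : (3 < p)%N) (hk : (0 < k)%N) :
  (2 ^+ (p ^ k)) *: D3 (p ^ k) (1 : F) + 1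
  = 3 *: (1 - 4 *: 'X) ^+ ((p ^ k).-1 %/ 2).
Proof.
have odd_pk : odd (p ^ k).
  by case: (even_prime hp) hp3 => [-> // | odd_p _]; rewrite oddX odd_p orbT.
have p_le_pk : (p <= p ^ k)%N by rewrite -{1}(expn1 p) leq_pexp2l // prime_gt0.
have pk_eq : (p ^ k = (2 * ((p ^ k).-1 %/ 2)).+1)%N.
  by move: (odd_double_half (p ^ k)); rewrite odd_pk -divn2 -muln2; lia.
have [E2_2m E2_2m1] := dicksonE2_pchar hchar pk_eq.
set m := ((p ^ k).-1 %/ 2)%N in pk_eq E2_2m E2_2m1 *.
have [t m2_eq] : exists t, (2 * m = t.+1)%N by exists (2 * m).-1; lia.
rewrite m2_eq in E2_2m E2_2m1; rewrite pk_eq m2_eq D3_1_dicksonE.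
rewrite -!mul_polyC rmorphXn /= !polyC_natr -E2_2m -[X in _ + X = _]E2_2m1 /dicksonE2.
by rewrite !exprS; ring.
Qed.
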